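(* If $G$ is a finite simple graph of order $n$ with at least one edge such that $G[\mathrm{core}(G)]$ is Class 1, then $\mathrm{es}_{\Delta}(G)\leq \frac{n}{2}$. In particular, if $G$ is a Class 1 graph, then $\mathrm{es}_{\Delta}(G)\leq\frac{n}{2}$.
   Context: $\mathrm{core}(G)$ is the set of vertices of $G$ of maximum degree $\Delta(G)$. A graph $H$ is Class 1 if its chromatic index equals its maximum degree; in the first statement this is interpreted as $G[\mathrm{core}(G)]$ having a proper $\Delta(G)$-edge coloring. $\mathrm{es}_{\Delta}(G)$ is the minimum number of edges of $G$ whose removal results in a subgraph with maximum degree $\Delta(G)-1$. *)

From mathcomp Require Import all_boot.
Set Implicit Arguments. Unset Strict Implicit. Unset Printing Implicit Defensive.

Section Graphs.
Variable T : finType.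

Definition simple_graph (e : rel T) : Prop := symmetric e /\ irreflexive e.

Definition deg (e : rel T) (x : T) : nat := #|[set y | e x y]|.

Definition Delta (e : rel T) : nat := \max_(x : T) deg e x.

Definition core (e : rel T) : {set T} := [set x | deg e x == Delta e].

(* induced subgraph G[S] (on the same vertex type; vertices outside S are isolated
   and do not affect edges, degrees of S, or edge colourings) *)
Definition induced (e : rel T) (S : {set T}) : rel T :=
  fun x y => [&& x \in S, y \in S & e x y].

Definition edges (e : rel T) : {set {set T}} :=
  [set A : {set T} | [exists x, exists y, e x y && (A == [set x; y])]].

Definition remove_edges (e : rel T) (F : {set {set T}}) : rel T :=
  fun x y => e x y && ([set x; y] \notin F).

Definition proper_edge_colouring (e : rel T) (k : nat)
    (c : {ffun {set T} -> 'I_k}) : bool :=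
  [forall A : {set T}, forall B : {set T},
    [&& A \in edges e, B \in edges e, A != B & A :&: B != set0] ==> (c A != c B)].

Definition edge_colourable (e : rel T) (k : nat) : bool :=
  [exists c : {ffun {set T} -> 'I_k}, proper_edge_colouring e c].

(* chromatic index: least k admitting a proper k-edge colouring
   (k = #|edges e| always suffices, used as default bound) *)
Definition chromatic_index (e : rel T) : nat :=
  \big[minn/#|edges e|]_(k < (#|edges e|).+1 | edge_colourable e k) k.

Definition class1 (e : rel T) : Prop := chromatic_index e = Delta e.

Definition esDelta (e : rel T) : nat :=
  \big[minn/#|edges e|]_(F : {set {set T}} |
      (F \subset edges e) && (Delta (remove_edges e F) == (Delta e).-1)) #|F|.

End Graphs.

From HB Require Import structures.
From mathcomp Require Import all_boot zify.
Set Implicit Arguments. Unset Strict Implicit. Unset Printing Implicit Defensive.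

(* Fix a proper Delta-edge-colouring of G[core G].  For a colour i, the class
   M_i of i is a matching of core vertices; a core vertex v missed by i misses
   at most as many colours as it has neighbours outside the core, so it has
   such a neighbour, and adding one edge vv' per missed vertex gives an edge
   set F_i meeting every core vertex exactly once.  Deleting F_i lowers the
   maximum degree by one, and 2|F_i| <= |core| + |U_i|, U_i being the core
   vertices missed by i.  Summed over the Delta colours, the |U_i| are bounded
   by the number of edges leaving the core, at most Delta (n - |core|); so some
   |U_i| <= n - |core| and 2 es_Delta(G) <= 2|F_i| <= n.  For a Class 1 graph,
   a Delta-edge-colouring of G restricts to G[core G]. *)

HB.instance Definition _ := SemiGroup.isComLaw.Build nat minn minnA minnC.

Lemma bigminn_le_cond (I : finType) (P : pred I) (F : I -> nat) x0 j :
  P j -> \big[minn/x0]_(i | P i) F i <= F j.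
Proof. by move=> Pj; rewrite (bigD1 j) //= geq_minl. Qed.

Lemma exists_le_average (I : finType) (f : I -> nat) :
  0 < #|I| -> exists i, #|I| * f i <= \sum_j f j.
Proof.
case/card_gt0P=> i0 _; case: (arg_minnP f (isT : xpredT i0)) => i _ min_i.
by exists i; rewrite -sum_nat_const; apply: leq_sum => j _; apply: min_i.
Qed.

Lemma exchange_sum_card (I J : finType) (R : I -> J -> bool) :
  \sum_i #|[set j | R i j]| = \sum_j #|[set i | R i j]|.
Proof.
have card_sum (K : finType) (P : pred K) : #|[set x | P x]| = \sum_x P x.
  by rewrite -sum1dep_card big_mkcond; apply: eq_bigr => x _; case: (P x).
under eq_bigr do rewrite card_sum.
by rewrite exchange_big; apply: eq_bigr => j _; rewrite card_sum.
Qed.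

Lemma set2_eq_inv (T : finType) (x y v w : T) :
  x != y -> x != w -> [set x; y] = [set v; w] -> x = v /\ y = w.
Proof.
move=> xy xw E.
have /set2P[xv | xw'] : x \in [set v; w] by rewrite -E set21.
  have /set2P[yv | //] : y \in [set v; w] by rewrite -E set22.
  by rewrite xv yv eqxx in xy.
by rewrite xw' eqxx in xw.
Qed.

Section Graph.
Variable T : finType.

Lemma deg_le_Delta (g : rel T) x : deg g x <= Delta g.
Proof. exact: leq_bigmax. Qed.

Definition matching (g : rel T) (M : {set {set T}}) : bool :=
  (M \subset edges g) && trivIset M.

Lemma edgesP (g : rel T) A :
  reflect (exists x y, g x y /\ A = [set x; y]) (A \in edges g).
Proof.
rewrite inE; apply: (iffP existsP) => [[x /existsP[y /andP[gxy /eqP->]]] | [x [y [gxy ->]]]].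
  by exists x, y.
by exists x; apply/existsP; exists y; rewrite gxy eqxx.
Qed.

Variable e : rel T.

Definition keep_edges (F : {set {set T}}) : rel T :=
  fun x y => e x y && ([set x; y] \in F).

Lemma deg_remove_edges F x :
  deg e x = deg (remove_edges e F) x + deg (keep_edges F) x.
Proof.
rewrite /deg addnC -(cardsID [set y | [set x; y] \in F] [set y | e x y]).
by congr (_ + _); apply: eq_card => y; rewrite !inE /keep_edges /remove_edges // andbC.
Qed.

Lemma Delta_remove_edges F :
  {in core e, forall x, deg (keep_edges F) x = 1} ->
  Delta (remove_edges e F) = (Delta e).-1.
Proof.
move=> deg1; apply/eqP; rewrite eqn_leq; apply/andP; split.
  apply/bigmax_leqP => x _; have := deg_remove_edges F x.
  case: (boolP (x \in core e)) => [xC | xNC].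
    by rewrite deg1 //; move: xC; rewrite inE => /eqP ->; lia.
  have : deg e x < Delta e by move: xNC; rewrite inE ltn_neqAle deg_le_Delta andbT.
  lia.
case: (pickP (xpredT : pred T)) => [x0 _ | T0]; last by rewrite /Delta big_pred0.
have [xm DeltaE] : {xm | Delta e = deg e xm}.
  by apply: eq_bigmax; apply/card_gt0P; exists x0.
have xmC : xm \in core e by rewrite inE -DeltaE.
apply: leq_trans (deg_le_Delta (remove_edges e F) xm); have := deg_remove_edges F xm.
by rewrite deg1 // -DeltaE; lia.
Qed.

Lemma deg_induced_out (S : {set T}) v : v \in S ->
  deg (induced e S) v + #|[set u | e v u && (u \notin S)]| = deg e v.
Proof.
move=> vS; rewrite /deg -(cardsID S [set u | e v u]).
by congr (_ + _); apply: eq_card => u; rewrite !inE /induced ?vS /= andbC.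
Qed.

Lemma edges_induced_sub (S : {set T}) : edges (induced e S) \subset edges e.
Proof.
apply/subsetP => A /edgesP[x [y [/and3P[_ _ exy] ->]]]; apply/edgesP; by exists x, y.
Qed.

Lemma esDelta_le (F : {set {set T}}) :
  F \subset edges e -> Delta (remove_edges e F) = (Delta e).-1 -> esDelta e <= #|F|.
Proof. by move=> sFE DeltaF; apply: bigminn_le_cond; rewrite sFE DeltaF eqxx. Qed.

End Graph.

Section SimpleGraph.
Variables (T : finType) (e : rel T).
Hypotheses (e_sym : symmetric e) (e_irr : irreflexive e).

Lemma edge_neq x y : e x y -> x != y.
Proof. by apply: contraTneq => ->; rewrite e_irr. Qed.

Lemma induced_irr (S : {set T}) : irreflexive (induced e S).
Proof. by move=> x; rewrite /induced e_irr !andbF. Qed.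

Lemma card_edge A : A \in edges e -> #|A| = 2.
Proof. by case/edgesP=> x [y [/edge_neq xy ->]]; rewrite cards2 xy. Qed.

Lemma edge_partner A x : A \in edges e -> x \in A -> exists2 y, e x y & A = [set x; y].
Proof.
case/edgesP=> a [b [eab ->]] /set2P[-> | ->]; first by exists b.
by exists a; rewrite 1?e_sym // setUC.
Qed.

Lemma matching_eq M A B x :
  matching e M -> A \in M -> B \in M -> x \in A -> x \in B -> A = B.
Proof.
case/andP=> _ /trivIsetP tM AM BM xA xB; case: (eqVneq A B) => // /(tM _ _ AM BM).
by move/disjointFr/(_ xA); rewrite xB.
Qed.

Lemma card_cover_matching M : matching e M -> #|cover M| = 2 * #|M|.
Proof.
case/andP=> sME /eqP <-; rewrite mulnC -sum_nat_const.
by apply: eq_bigr => A /(subsetP sME); apply: card_edge.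
Qed.

Lemma sum_out_deg_le (S : {set T}) :
  \sum_(v in S) #|[set u | e v u && (u \notin S)]| <= #|~: S| * Delta e.
Proof.
rewrite big_mkcond /=.
rewrite (eq_bigr (fun v => #|[set u | [&& v \in S, e v u & u \notin S]]|)); last first.
  move=> v _; case: ifP => _; first by apply: eq_card => u; rewrite !inE.
  by apply/esym/eqP; rewrite cards_eq0; apply/eqP/setP => u; rewrite !inE.
rewrite exchange_sum_card -sum_nat_const [X in _ <= X]big_mkcond /=; apply: leq_sum => u _.
rewrite inE; case: (boolP (u \in S)) => uS /=.
  by rewrite leqn0 cards_eq0; apply/eqP/setP => v; rewrite !inE !andbF.
apply: leq_trans (deg_le_Delta e u); apply: subset_leq_card; apply/subsetP => v.
by rewrite !inE e_sym => /and3P[].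
Qed.

End SimpleGraph.

Section MatchingExtension.
Variables (T : finType) (e : rel T) (S : {set T}) (M : {set {set T}}).
Hypotheses (e_sym : symmetric e) (e_irr : irreflexive e).
Hypothesis M_matching : matching (induced e S) M.
Hypothesis uncovered_out :
  {in S :\: cover M, forall v, exists u, e v u && (u \notin S)}.

Lemma matching_induced : matching e M.
Proof.
case/andP: M_matching => sME tM; rewrite /matching tM andbT.
exact: subset_trans sME (edges_induced_sub e S).
Qed.

Lemma cover_matching_induced : cover M \subset S.
Proof.
apply/subsetP => x /bigcupP[A AM]; case/andP: M_matching => /subsetP/(_ A AM) + _.
by case/edgesP=> a [b [/and3P[aS bS _] ->]] /set2P[-> | ->].
Qed.

Let out_nbr v := odflt v [pick u | e v u && (u \notin S)].

Lemma out_nbrP v : v \in S :\: cover M -> e v (out_nbr v) && (out_nbr v \notin S).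
Proof.
move=> vU; rewrite /out_nbr; case: pickP => [u -> // | none].
by case: (uncovered_out vU) => u; rewrite none.
Qed.

Let extension := M :|: [set [set v; out_nbr v] | v in S :\: cover M].

Lemma extension_sub : extension \subset edges e.
Proof.
rewrite subUset; case/andP: matching_induced => -> _ /=.
apply/subsetP => A /imsetP[v /out_nbrP/andP[evq _] ->].
by apply/edgesP; exists v, (out_nbr v).
Qed.

Lemma extension_edge_cases x z :
  x \in S -> e x z -> [set x; z] \in extension ->
  if x \in cover M then [set x; z] \in M else z == out_nbr x.
Proof.
move=> xS exz; case/setUP => [xzM | /imsetP[v vU E]].
  by have -> : x \in cover M by apply/bigcupP; exists [set x; z]; rewrite ?set21.
have xq : x != out_nbr v by case/andP: (out_nbrP vU) => _; apply: contraNneq => <-.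
have [-> ->] := set2_eq_inv (edge_neq e_irr exz) xq E.
by case/setDP: vU => _ /negbTE ->.
Qed.

Lemma deg_extension x : x \in S -> deg (keep_edges e extension) x = 1.
Proof.
move=> xS; apply/eqP; rewrite eqn_leq; apply/andP; split.
  apply/card_le1_eqP => z1 z2; rewrite !inE => /andP[e1 F1] /andP[e2 F2].
  move: (extension_edge_cases xS e1 F1) (extension_edge_cases xS e2 F2).
  case: ifP => _; last by move=> /eqP -> /eqP ->.
  move=> M1 M2; have E : [set x; z2] = [set x; z1].
    exact: matching_eq matching_induced M2 M1 (set21 _ _) (set21 _ _).
  by case: (set2_eq_inv (edge_neq e_irr e2) (edge_neq e_irr e1) E).
rewrite card_gt0; apply/set0Pn; case: (boolP (x \in cover M)) => [/bigcupP[A AM xA] | xNM].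
  have AE : A \in edges e by case/andP: matching_induced => /subsetP/(_ A AM).
  case: (edge_partner e_sym AE xA) => y exy AE'; exists y.
  by rewrite inE /keep_edges exy -AE' inE AM.
have xU : x \in S :\: cover M by rewrite inE xNM.
exists (out_nbr x); rewrite inE /keep_edges inE; case/andP: (out_nbrP xU) => -> _.
by apply/orP; right; apply/imsetP; exists x.
Qed.

Lemma card_extension : 2 * #|extension| <= #|S| + #|S :\: cover M|.
Proof.
have ext_le : #|extension| <= #|M| + #|S :\: cover M|.
  by rewrite cardsU (leq_trans (leq_subr _ _)) // leq_add2l leq_imset_card.
have := card_cover_matching e_irr matching_induced.
have := subset_leq_card cover_matching_induced.
rewrite cardsDS ?cover_matching_induced // in ext_le *; lia.
Qed.

Lemma matching_extension :
  exists F : {set {set T}}, [/\ F \subset edges e,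
    {in S, forall x, deg (keep_edges e F) x = 1} &
    2 * #|F| <= #|S| + #|S :\: cover M|].
Proof.
by exists extension; split; [exact: extension_sub | exact: deg_extension | exact: card_extension].
Qed.

End MatchingExtension.

Section EdgeColouring.
Variables (T : finType) (g : rel T) (k : nat) (c : {ffun {set T} -> 'I_k}).
Hypotheses (g_irr : irreflexive g) (c_proper : proper_edge_colouring g c).

Definition colour_class (i : 'I_k) : {set {set T}} := [set A in edges g | c A == i].

Lemma proper_colour_eq A B :
  A \in edges g -> B \in edges g -> c A = c B -> A :&: B != set0 -> A = B.
Proof.
move=> EA EB cAB AB; apply/eqP; apply: contraT => nAB.
by move/forallP/(_ A)/forallP/(_ B): c_proper; rewrite EA EB nAB AB cAB eqxx.
Qed.

Lemma colour_class_matching i : matching g (colour_class i).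
Proof.
apply/andP; split; first by apply/subsetP => A; rewrite inE => /andP[].
apply/trivIsetP => A B /setIdP[EA /eqP cA] /setIdP[EB /eqP cB] /eqP nAB.
rewrite -setI_eq0; apply/negPn/negP => AB; apply: nAB.
by apply: proper_colour_eq EA EB _ AB; rewrite cA cB.
Qed.

Lemma deg_le_card_colours v :
  deg g v <= #|[set i | v \in cover (colour_class i)]|.
Proof.
rewrite /deg -(card_in_imset (f := fun u => c [set v; u])).
  apply: subset_leq_card; apply/subsetP => j /imsetP[u]; rewrite inE => gvu ->.
  rewrite inE; apply/bigcupP; exists [set v; u]; last exact: set21.
  by rewrite inE eqxx andbT; apply/edgesP; exists v, u.
move=> u1 u2; rewrite !inE => gvu1 gvu2 cE.
have E : [set v; u1] = [set v; u2].
  apply: (proper_colour_eq _ _ cE).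
  - by apply/edgesP; exists v, u1.
  - by apply/edgesP; exists v, u2.
  - by apply/set0Pn; exists v; rewrite inE !set21.
by case: (set2_eq_inv (edge_neq g_irr gvu1) (edge_neq g_irr gvu2) E).
Qed.

Lemma card_missing_colours v :
  #|[set i | v \notin cover (colour_class i)]| <= k - deg g v.
Proof.
have := cardsC [set i | v \in cover (colour_class i)].
have -> : ~: [set i | v \in cover (colour_class i)] = [set i | v \notin cover (colour_class i)].
  by apply/setP => i; rewrite !inE.
by rewrite card_ord; have := deg_le_card_colours v; lia.
Qed.

Lemma sum_card_uncovered (S : {set T}) :
  \sum_i #|S :\: cover (colour_class i)| <= \sum_(v in S) (k - deg g v).
Proof.
rewrite (eq_bigr (fun i => #|[set v | (v \in S) && (v \notin cover (colour_class i))]|)).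
  rewrite exchange_sum_card [X in _ <= X]big_mkcond /=; apply: leq_sum => v _.
  case: ifP => _; last by rewrite leqn0 cards_eq0; apply/eqP/setP => i; rewrite !inE.
  apply: leq_trans (card_missing_colours v); apply: subset_leq_card.
  by apply/subsetP => i; rewrite !inE.
by move=> i _; apply: eq_card => v; rewrite !inE andbC.
Qed.

End EdgeColouring.

Section CoreColouring.
Variables (T : finType) (e : rel T).
Hypotheses (e_sym : symmetric e) (e_irr : irreflexive e).
Variable c : {ffun {set T} -> 'I_(Delta e)}.
Hypothesis c_proper : proper_edge_colouring (induced e (core e)) c.

Local Notation C := (core e).
Local Notation uncovered i := (C :\: cover (colour_class (induced e C) c i)).

Lemma Delta_sub_deg_induced_core v : v \in C ->
  Delta e - deg (induced e C) v = #|[set u | e v u && (u \notin C)]|.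
Proof.
by move=> vC; move: (vC); rewrite inE => /eqP <-; rewrite -(deg_induced_out e vC); lia.
Qed.

Lemma sum_card_uncovered_core : \sum_i #|uncovered i| <= #|~: C| * Delta e.
Proof.
apply: leq_trans (sum_card_uncovered (induced_irr e_irr C) c_proper C) _.
rewrite (eq_bigr _ Delta_sub_deg_induced_core); exact: sum_out_deg_le.
Qed.

Lemma uncovered_core_out i :
  {in uncovered i, forall v, exists u, e v u && (u \notin C)}.
Proof.
move=> v /setDP[vC vNi]; have := card_missing_colours (induced_irr e_irr C) c_proper v.
rewrite Delta_sub_deg_induced_core // => missing_le.
have /card_gt0P[u] : 0 < #|[set u | e v u && (u \notin C)]|.
  by apply: leq_trans missing_le; rewrite card_gt0; apply/set0Pn; exists i; rewrite inE.
by rewrite inE; exists u.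
Qed.

End CoreColouring.

Lemma esDelta_le_core_colouring (T : finType) (e : rel T) :
  simple_graph e -> edges e != set0 ->
  edge_colourable (induced e (core e)) (Delta e) -> 2 * esDelta e <= #|T|.
Proof.
case=> e_sym e_irr /set0Pn[A0 /edgesP[x0 [y0 [exy0 _]]]] /existsP[c c_proper].
have Delta_gt0 : 0 < Delta e.
  apply: leq_trans (deg_le_Delta e x0).
  by rewrite card_gt0; apply/set0Pn; exists y0; rewrite inE.
pose U i := core e :\: cover (colour_class (induced e (core e)) c i).
have [i U_avg] : exists i, Delta e * #|U i| <= \sum_j #|U j|.
  by have := exists_le_average (fun j => #|U j|); rewrite card_ord; apply.
have U_le : #|U i| <= #|~: core e|.
  rewrite -(leq_pmul2l Delta_gt0); apply: leq_trans U_avg _.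
  by rewrite mulnC; exact: sum_card_uncovered_core.
have [F [sFE F_deg1 F_card]] := matching_extension e_sym e_irr
  (colour_class_matching c_proper i) (uncovered_core_out e_irr c_proper (i := i)).
have := esDelta_le sFE (Delta_remove_edges F_deg1).
have := cardsC (core e); rewrite /U in U_le; lia.
Qed.

Lemma edge_colourable_induced (T : finType) (e : rel T) (S : {set T}) k :
  edge_colourable e k -> edge_colourable (induced e S) k.
Proof.
case/existsP=> c c_proper; apply/existsP; exists c.
apply/forallP => A; apply/forallP => B; apply/implyP => /and4P[EA EB nAB AB].
move/forallP/(_ A)/forallP/(_ B)/implyP: c_proper; apply.
by rewrite !(subsetP (edges_induced_sub e S)) ?nAB.
Qed.

Lemma edge_colourable_card_edges (T : finType) (e : rel T) :
  edges e != set0 -> edge_colourable e #|edges e|.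
Proof.
case/set0Pn=> A0 EA0; apply/existsP; exists [ffun A => enum_rank_in EA0 A].
apply/forallP => A; apply/forallP => B; apply/implyP => /and4P[EA EB nAB _].
rewrite !ffunE; apply: contra nAB => /eqP cAB.
by rewrite -(enum_rankK_in EA0 EA) cAB enum_rankK_in.
Qed.

Lemma edge_colourable_chromatic_index (T : finType) (e : rel T) :
  edges e != set0 -> edge_colourable e (chromatic_index e).
Proof.
move=> ne; apply: (big_ind (edge_colourable e)) => //.
  exact: edge_colourable_card_edges.
by move=> k l; rewrite /minn; case: ifP.
Qed.

Theorem corollary5p3 (T : finType) (e : rel T) :
  simple_graph e ->
  edges e != set0 ->
  (edge_colourable (induced e (core e)) (Delta e) ->
     2 * esDelta e <= #|T|) /\
  (class1 e -> 2 * esDelta e <= #|T|).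
Proof.
move=> e_simple ne; split; first exact: esDelta_le_core_colouring.
rewrite /class1 => chi_Delta; apply: esDelta_le_core_colouring => //.
by apply: edge_colourable_induced; rewrite -chi_Delta; exact: edge_colourable_chromatic_index.
Qed.
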